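(* For $|z_1|,|z_2|<1$, integers $i,j\ge0$ and $k_1,\ldots,k_{i+j}\ge1$ with $i+j\ge1$ (all 2MPLs below in the variables $(z_1,z_2)$): $$\frac{\partial}{\partial z_1}\mathrm{Li}_{k_1,\ldots,k_{i+j}}(i,j)=\begin{cases}\frac{z_2}{1-z_1z_2}\mathrm{Li}_{k_2,\ldots,k_j}(0,j-1)&(i=0,k_1=1),\\ \frac1{1-z_1}\mathrm{Li}_{k_2,\ldots,k_{i+j}}(i-1,j)&(i>0,k_1=1),\\ \frac1{z_1}\mathrm{Li}_{k_1-1,k_2,\ldots,k_{i+j}}(i,j)&(k_1>1),\end{cases}$$ and, if $j\ge1$, $$\frac{\partial}{\partial z_2}\mathrm{Li}_{k_1,\ldots,k_{i+j}}(i,j)=\begin{cases}\frac{z_1}{1-z_1z_2}\mathrm{Li}_{k_2,\ldots,k_j}(0,j-1)&(i=0,k_1=1),\\ \frac1{1-z_2}\mathrm{Li}_{\mathbf k'}(i,j-1)-\frac1{1-z_2}\mathrm{Li}_{\mathbf k'}(i-1,j)-\frac1{z_2}\mathrm{Li}_{\mathbf k'}(i-1,j)&(i>0,k_{i+1}=1),\\ \frac1{z_2}\mathrm{Li}_{k_1,\ldots,k_i,k_{i+1}-1,k_{i+2},\ldots,k_{i+j}}(i,j)&(k_{i+1}>1),\end{cases}$$ where $\mathbf k'=(k_1,\ldots,k_i,k_{i+2},\ldots,k_{i+j})$.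
   Context: For integers $i,j\ge0$, $k_1,\ldots,k_{i+j}\ge1$ and $|z_1|,|z_2|<1$, the multiple polylogarithm of two variables (2MPL) of main variable $z_1$ is $$\mathrm{Li}_{k_1,\ldots,k_{i+j}}(i,j;z_1,z_2)=\sum_{n_1>n_2>\cdots>n_{i+j}>0}\frac{z_1^{n_1}z_2^{n_{i+1}}}{n_1^{k_1}\cdots n_{i+j}^{k_{i+j}}},$$ with the factor $z_2^{n_{i+1}}$ omitted when $j=0$; the empty 2MPL $\mathrm{Li}_\emptyset(0,0;z_1,z_2)$ equals $1$. *)

From Stdlib Require Import Reals List.
From Coquelicot Require Import Coquelicot.
Import ListNotations.
Open Scope C_scope.

(* truncated nested sum:
   nsum [(a_1,k_1);...;(a_d,k_d)] M
     = sum_{M > n_1 > n_2 > ... > n_d > 0} prod_l a_l^{n_l} / n_l^{k_l} *)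
Fixpoint nsum (fs : list (C * nat)) (M : nat) : C :=
  match fs with
  | [] => 1
  | (a, k) :: fs' =>
      sum_n (fun n => if (0 <? n)%nat
                      then (pow_n a n / pow_n (RtoC (INR n)) k) * nsum fs' n
                      else RtoC 0) (Nat.pred M)
  end.

(* the base attached to the l-th index (l = 0,...,i+j-1, 0-based):
   z1 for l = 0, times z2 when i = 0; z2 for l = i > 0; 1 otherwise *)
Definition mpl_base (i : nat) (z1 z2 : C) (l : nat) : C :=
  (if (l =? 0)%nat then z1 else 1) * (if (l =? i)%nat then z2 else 1).

Definition mpl_factors (ks : list nat) (i j : nat) (z1 z2 : C) : list (C * nat) :=
  map (fun p => (if (j =? 0)%nat
                 then (if (fst p =? 0)%nat then z1 else 1)
                 else mpl_base i z1 z2 (fst p), snd p))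
      (combine (seq 0 (length ks)) ks).

Definition Li2 (ks : list nat) (i j : nat) (z1 z2 : C) : C :=
  @lim C_CompleteNormedModule (filtermap (nsum (mpl_factors ks i j z1 z2)) eventually).

(* Li2 is the limit of truncated nested sums in which the differentiated variable enters exactly
   one base, as [c * w].  Differentiating that factor termwise replaces [(c w)^n / n^k] by
   [n c^n w^(n-1) / n^k].  For [|w|, |z| <= r < 1] the Taylor remainder
   [|w^n - z^n - n z^(n-1) (w - z)|] is at most [n^2 r^(n-2) |w - z|^2]; against the polynomially
   bounded inner sums and the geometric decay of the outer ones this yields a quadratic remainder
   bound uniform in the truncation, so the limit is differentiable and its derivative is the limit
   of the termwise derivatives.  For [k > 1] this is [1/z] times the sum with exponent [k - 1].
   For [k = 1] the weight is the geometric [(c z)^(n-1)], and summation by parts moves the factor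
   [c z] into the next inner base at the cost of [1 / (1 - c z)]; the boundary term vanishes when
   the variable sits in the outermost index, and otherwise folds into the preceding base, which is
   where the [1 / z2] term comes from. *)

From Stdlib Require Import Reals List Lia Lra.
From Coquelicot Require Import Coquelicot.
Import ListNotations.
Open Scope C_scope.

(* Coquelicot's generic [plus], [mult], [zero], [one] must be folded back into
   the [C] operations before [ring] and [field] can see them. *)
Ltac Cfold := match goal with |- ?x = ?y => change (@eq C x y) end;
  repeat change (@plus _ ?a ?b) with (Cplus a b);
  repeat change (@mult _ ?a ?b) with (Cmult a b);
  repeat change (@zero _) with (RtoC 0);
  repeat change (@one _) with (RtoC 1).

Ltac destruct_eqb := repeat match goal with
  | |- context [(?a =? ?b)%nat] => destruct (Nat.eqb_spec a b) end;
  cbn iota; try lia; try reflexivity.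

(** * Factor lists and nested sums *)

Fixpoint indexed_factors (g : nat -> C) (s : nat) (ks : list nat) : list (C * nat) :=
  match ks with
  | [] => []
  | k :: ks' => (g s, k) :: indexed_factors g (S s) ks'
  end.

Lemma indexed_factors_ext g g' s ks :
  (forall l, (s <= l < s + length ks)%nat -> g l = g' l) ->
  indexed_factors g s ks = indexed_factors g' s ks.
Proof.
  revert s; induction ks as [|k ks IH]; intros s H; simpl; auto.
  f_equal; [f_equal; apply H; simpl; lia|].
  apply IH; intros l Hl; apply H; simpl; lia.
Qed.

Lemma indexed_factors_app g s xs ys :
  indexed_factors g s (xs ++ ys) =
  indexed_factors g s xs ++ indexed_factors g (s + length xs) ys.
Proof.
  revert s; induction xs as [|x xs IH]; intros s; simpl.
  - now rewrite Nat.add_0_r.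
  - now rewrite IH, Nat.add_succ_r.
Qed.

Lemma indexed_factors_shift g s ks :
  indexed_factors g (S s) ks = indexed_factors (fun l => g (S l)) s ks.
Proof. revert s; induction ks; intros s; simpl; f_equal; auto. Qed.

Lemma indexed_factors_slot g g' c w P k S0 :
  (forall l, l <> length P -> g l = g' l) -> g (length P) = c * w ->
  indexed_factors g 0 (P ++ k :: S0) =
  indexed_factors g' 0 P ++ (c * w, k) :: indexed_factors g' (S (length P)) S0.
Proof.
  intros Hg Hp. rewrite indexed_factors_app. simpl. rewrite Hp.
  f_equal; [|f_equal]; apply indexed_factors_ext; intros l Hl; apply Hg; lia.
Qed.

Fixpoint nsum_with (pre : list (C * nat)) (h : nat -> C) (M : nat) : C :=
  match pre with
  | [] => h M
  | (a, k) :: pre' =>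
      sum_n (fun n => if (0 <? n)%nat
                      then (pow_n a n / pow_n (RtoC (INR n)) k) * nsum_with pre' h n
                      else RtoC 0) (Nat.pred M)
  end.

Lemma nsum_with_ext pre h h' M :
  (forall m, h m = h' m) -> nsum_with pre h M = nsum_with pre h' M.
Proof.
  revert M; induction pre as [|[a k] pre IH]; intros M H; simpl; auto.
  apply sum_n_m_ext; intros n. destruct (0 <? n)%nat; auto. now rewrite IH.
Qed.

Lemma nsum_app pre fs M : nsum (pre ++ fs) M = nsum_with pre (nsum fs) M.
Proof.
  revert M; induction pre as [|[a k] pre IH]; intros M; simpl; auto.
  apply sum_n_m_ext; intros n. destruct (0 <? n)%nat; auto. now rewrite IH.
Qed.

Lemma nsum_with_app p1 p2 h M :
  nsum_with (p1 ++ p2) h M = nsum_with p1 (nsum_with p2 h) M.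
Proof.
  revert M; induction p1 as [|[a k] p1 IH]; intros M; simpl; auto.
  apply sum_n_m_ext; intros n. destruct (0 <? n)%nat; auto. now rewrite IH.
Qed.

Lemma nsum_with_plus pre h1 h2 M :
  nsum_with pre (fun m => h1 m + h2 m) M = nsum_with pre h1 M + nsum_with pre h2 M.
Proof.
  revert M; induction pre as [|[a k] pre IH]; intros M; simpl; auto.
  rewrite <- (sum_n_plus (G:=C_AbelianMonoid)).
  apply sum_n_m_ext; intros n. destruct (0 <? n)%nat; [rewrite IH|]; Cfold; ring.
Qed.

Lemma nsum_with_scal pre c h M :
  nsum_with pre (fun m => c * h m) M = c * nsum_with pre h M.
Proof.
  revert M; induction pre as [|[a k] pre IH]; intros M; simpl; auto.
  rewrite <- (sum_n_mult_l (K:=C_Ring)).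
  apply sum_n_m_ext; intros n. destruct (0 <? n)%nat; [rewrite IH|]; Cfold; ring.
Qed.

Lemma nsum_with_minus pre h1 h2 M :
  nsum_with pre (fun m => h1 m - h2 m) M = nsum_with pre h1 M - nsum_with pre h2 M.
Proof.
  unfold Cminus. rewrite (nsum_with_ext pre _ (fun m => h1 m + (-1) * h2 m)) by (intros; ring).
  rewrite nsum_with_plus, nsum_with_scal. ring.
Qed.

(** * Polynomially weighted geometric series *)

Open Scope R_scope.

Definition poly_geom_sum (p : nat) (r : R) (N : nat) :=
  sum_f_R0 (fun n => INR n ^ p * r ^ n) N.

Lemma pow_succ_diff_le q x : 0 <= x -> (x + 1) ^ S q - x ^ S q <= INR (S q) * (x + 1) ^ q.
Proof.
  intros Hx. induction q as [|q IH]; [simpl; lra|].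
  assert (x ^ S q <= (x + 1) ^ S q) by (apply pow_incr; lra).
  assert (0 <= x ^ S q) by (apply pow_le; lra).
  assert ((x + 1) * ((x + 1) ^ S q - x ^ S q) <= (x + 1) * (INR (S q) * (x + 1) ^ q))
    by (apply Rmult_le_compat_l; lra).
  rewrite (S_INR (S q)). simpl pow in *. nra.
Qed.

(* Summation by parts against [1 - r]: each weighted sum is bounded by the previous one. *)
Lemma poly_geom_sum_0 r N : (1 - r) * poly_geom_sum 0 r N + r ^ S N = 1.
Proof.
  unfold poly_geom_sum; induction N as [|N IH]; [simpl; ring|].
  rewrite tech5. replace (r ^ S (S N)) with (r * r ^ S N) by reflexivity.
  rewrite pow_O, Rmult_1_l. lra.
Qed.

Lemma poly_geom_sum_S q r N : 0 <= r < 1 ->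
  (1 - r) * poly_geom_sum (S q) r N + INR N ^ S q * r ^ S N <= INR (S q) * poly_geom_sum q r N.
Proof.
  intros Hr. unfold poly_geom_sum. induction N as [|N IH].
  - simpl sum_f_R0. rewrite INR_0. replace (0 ^ S q) with 0 by (simpl; ring).
    assert (0 <= INR (S q) * (0 ^ q * r ^ 0)).
    { apply Rmult_le_pos; [apply pos_INR|]. apply Rmult_le_pos; apply pow_le; lra. }
    lra.
  - rewrite !tech5.
    pose proof (pow_succ_diff_le q (INR N) (pos_INR N)) as Hd. rewrite <- S_INR in Hd.
    assert (0 <= r ^ S N) by (apply pow_le; lra).
    pose proof (pos_INR (S q)).
    replace (r ^ S (S N)) with (r * r ^ S N) by reflexivity. nra.
Qed.

Lemma poly_geom_sum_bounded p r : 0 <= r < 1 -> exists K, forall N, poly_geom_sum p r N <= K.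
Proof.
  intros Hr. induction p as [|q [K HK]].
  - exists (/ (1 - r)). intros N. pose proof (poly_geom_sum_0 r N).
    assert (0 <= r ^ S N) by (apply pow_le; lra).
    apply (Rmult_le_reg_l (1 - r)); [lra|]. rewrite Rinv_r; lra.
  - exists (INR (S q) * K / (1 - r)). intros N.
    pose proof (poly_geom_sum_S q r N Hr).
    assert (0 <= INR N ^ S q * r ^ S N) by (apply Rmult_le_pos; apply pow_le; [apply pos_INR|lra]).
    assert (INR (S q) * poly_geom_sum q r N <= INR (S q) * K)
      by (apply Rmult_le_compat_l; [apply pos_INR|auto]).
    apply (Rmult_le_reg_l (1 - r)); [lra|].
    replace ((1 - r) * (INR (S q) * K / (1 - r))) with (INR (S q) * K) by (field; lra). lra.
Qed.

Lemma poly_geom_sum_nonneg p r N : 0 <= r -> 0 <= poly_geom_sum p r N.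
Proof.
  intros Hr. apply cond_pos_sum. intros n. apply Rmult_le_pos; apply pow_le; auto. apply pos_INR.
Qed.

Lemma ex_series_poly_geom d r : 0 <= r < 1 -> ex_series (fun n => INR n ^ d * r ^ n).
Proof.
  intros Hr. destruct (poly_geom_sum_bounded d r Hr) as [K HK].
  destruct (ex_finite_lim_seq_incr (sum_n (fun n => INR n ^ d * r ^ n)) K) as [l Hl].
  - intros n. rewrite sum_Sn. change (sum_n (fun n => INR n ^ d * r ^ n) n <=
      sum_n (fun n => INR n ^ d * r ^ n) n + INR (S n) ^ d * r ^ S n).
    assert (0 <= INR (S n) ^ d * r ^ S n)
      by (apply Rmult_le_pos; apply pow_le; [apply pos_INR|lra]).
    lra.
  - intros n. rewrite sum_n_Reals. apply HK.
  - now exists l.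
Qed.

Lemma sum_f_R0_le_INR_mult (g : nat -> R) c N :
  (forall n, (n <= N)%nat -> g n <= (if (0 <? n)%nat then c else 0)) -> 0 <= c ->
  sum_f_R0 g N <= INR N * c.
Proof.
  intros H Hc. induction N as [|N IH].
  - specialize (H 0%nat (le_n 0)). simpl in *. lra.
  - rewrite tech5, S_INR.
    assert (sum_f_R0 g N <= INR N * c) by (apply IH; intros; apply H; lia).
    specialize (H (S N) (le_n _)). simpl in H. lra.
Qed.

Open Scope C_scope.

Lemma pow_n_S (a : C) n : pow_n a (S n) = a * pow_n a n.
Proof. reflexivity. Qed.

Lemma pow_n_RtoC (x : R) k : pow_n (RtoC x) k = RtoC (x ^ k).
Proof.
  induction k as [|k IH]; [reflexivity|].
  rewrite pow_n_S, IH. simpl. now rewrite RtoC_mult.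
Qed.

Lemma Cmod_pow_n (a : C) n : Cmod (pow_n a n) = (Cmod a ^ n)%R.
Proof.
  induction n as [|n IH]; [apply Cmod_1|].
  rewrite pow_n_S, Cmod_mult, IH. reflexivity.
Qed.

Lemma pow_n_Cmult (a b : C) n : pow_n (a * b) n = pow_n a n * pow_n b n.
Proof.
  induction n as [|n IH]; [simpl; Cfold; ring|].
  rewrite !pow_n_S, IH. Cfold. ring.
Qed.

Lemma pow_n_neq0 (x : C) k : x <> RtoC 0 -> pow_n x k <> RtoC 0.
Proof.
  intros H. induction k as [|k IH]; simpl.
  - intro E. apply RtoC_inj in E. lra.
  - now apply Cmult_neq_0.
Qed.

Lemma RtoC_INR_neq0 n : (0 < n)%nat -> RtoC (INR n) <> RtoC 0.
Proof. intros H E. apply RtoC_inj in E. apply (not_0_INR n); [lia|auto]. Qed.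

Lemma Cmod_nsum_term_le (a : C) n k : (0 < n)%nat ->
  (Cmod (pow_n a n / pow_n (RtoC (INR n)) k) <= Cmod a ^ n)%R.
Proof.
  intros Hn. rewrite pow_n_RtoC.
  assert (Hk : (1 <= INR n ^ k)%R) by (apply pow_R1_Rle, (le_INR 1); lia).
  rewrite Cmod_div, Cmod_pow_n, Cmod_R, Rabs_pos_eq by (lra || (intro E; apply RtoC_inj in E; lra)).
  assert (0 <= Cmod a ^ n)%R by (apply pow_le, Cmod_ge_0).
  apply Rle_div_l; [lra|]. rewrite <- (Rmult_1_r (Cmod a ^ n)) at 1.
  now apply Rmult_le_compat_l.
Qed.

Lemma pow_le_1 (x : R) n : (0 <= x <= 1)%R -> (x ^ n <= 1)%R.
Proof. intros. rewrite <- (pow1 n). apply pow_incr. lra. Qed.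

Lemma Cmod_sum_n (t : nat -> C) N :
  (Cmod (sum_n t N) <= sum_f_R0 (fun n => Cmod (t n)) N)%R.
Proof. rewrite <- sum_n_Reals. apply (@norm_sum_n_m C_AbsRing C_NormedModule). Qed.

Definition bases_le_1 (fs : list (C * nat)) := List.Forall (fun p => (Cmod (fst p) <= 1)%R) fs.

Definition head_base_lt_1 (fs : list (C * nat)) :=
  match fs with [] => True | (a, _) :: _ => (Cmod a < 1)%R end.

Lemma Cmod_nsum_with_le pre h H M : bases_le_1 pre -> (forall m, Cmod (h m) <= H)%R ->
  (Cmod (nsum_with pre h M) <= INR (pred M) ^ length pre * H)%R.
Proof.
  intros Hpre Hh. revert M; induction pre as [|[a k] pre IH]; intros M.
  - simpl. rewrite Rmult_1_l. apply Hh.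
  - inversion Hpre as [|? ? Ha Hpre']; subst. simpl in Ha. specialize (IH Hpre').
    assert (HH : (0 <= H)%R) by (eapply Rle_trans; [apply Cmod_ge_0|apply (Hh O)]).
    simpl nsum_with. eapply Rle_trans; [apply Cmod_sum_n|].
    simpl length. rewrite <- tech_pow_Rmult, Rmult_assoc.
    apply sum_f_R0_le_INR_mult; [|apply Rmult_le_pos; auto; apply pow_le, pos_INR].
    intros n Hn. destruct (0 <? n)%nat eqn:E; [|rewrite Cmod_0; lra].
    apply Nat.ltb_lt in E. rewrite Cmod_mult, <- (Rmult_1_l (_ ^ _ * H)).
    apply Rmult_le_compat; try apply Cmod_ge_0.
    + eapply Rle_trans; [now apply Cmod_nsum_term_le|].
      apply pow_le_1. split; [apply Cmod_ge_0|auto].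
    + eapply Rle_trans; [apply IH|]. apply Rmult_le_compat_r; auto.
      apply pow_incr. split; [apply pos_INR|]. apply le_INR; lia.
Qed.

Lemma Cmod_nsum_le fs M : bases_le_1 fs -> (Cmod (nsum fs M) <= INR (pred M) ^ length fs)%R.
Proof.
  intros H. rewrite <- (app_nil_r fs), nsum_app, app_nil_r, <- (Rmult_1_r (_ ^ _)).
  apply Cmod_nsum_with_le; auto. intros; simpl; rewrite Cmod_1; lra.
Qed.

(* The outer sums damp the polynomial growth of [Cmod_nsum_with_le] geometrically. *)
Lemma Cmod_nsum_with_uniform pre : bases_le_1 pre -> head_base_lt_1 pre ->
  exists B, (0 <= B)%R /\ forall h H, (forall m, Cmod (h m) <= H)%R ->
    forall M, (Cmod (nsum_with pre h M) <= B * H)%R.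
Proof.
  intros Hle Hf. destruct pre as [|[a k] pre].
  { exists 1%R. split; [lra|]. intros h H Hh M. simpl. rewrite Rmult_1_l; auto. }
  simpl in Hf. inversion Hle as [|? ? Ha Hpre']; subst.
  destruct (poly_geom_sum_bounded (length pre) (Cmod a)) as [K HK];
    [split; [apply Cmod_ge_0|auto]|].
  exists K. split.
  { eapply Rle_trans; [apply (poly_geom_sum_nonneg (length pre) (Cmod a) O), Cmod_ge_0|apply HK]. }
  intros h H Hh M.
  assert (HH : (0 <= H)%R) by (eapply Rle_trans; [apply Cmod_ge_0|apply (Hh O)]).
  simpl nsum_with. eapply Rle_trans; [apply Cmod_sum_n|].
  apply Rle_trans with (sum_f_R0 (fun n => INR n ^ length pre * Cmod a ^ n * H) (pred M))%R.
  - apply sum_Rle. intros n _. destruct (0 <? n)%nat eqn:E.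
    + apply Nat.ltb_lt in E. rewrite Cmod_mult, (Rmult_comm (INR n ^ _)), Rmult_assoc.
      apply Rmult_le_compat; try apply Cmod_ge_0; [now apply Cmod_nsum_term_le|].
      eapply Rle_trans; [now apply Cmod_nsum_with_le|]. apply Rmult_le_compat_r; auto.
      apply pow_incr. split; [apply pos_INR|]. apply le_INR; lia.
    + rewrite Cmod_0. apply Rmult_le_pos; auto.
      apply Rmult_le_pos; apply pow_le; [apply pos_INR|apply Cmod_ge_0].
  - rewrite <- scal_sum, (Rmult_comm K H). apply Rmult_le_compat_l; auto. apply HK.
Qed.

(** * Limits of sequences in [C] *)

Lemma filterlim_pred : filterlim Nat.pred eventually eventually.
Proof. intros P [N HN]. exists (S N). intros n Hn. apply HN. lia. Qed.

Lemma lim_filtermap_eventually (f : nat -> C) (L : C) :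
  filterlim f eventually (locally L) ->
  @lim C_CompleteNormedModule (filtermap f eventually) = L.
Proof.
  intros H.
  assert (PF : ProperFilter (filtermap f eventually))
    by (apply filtermap_proper_filter, eventually_filter).
  assert (Hc : cauchy (filtermap f eventually)) by (intros eps; exists L; apply H, locally_ball).
  pose proof (@complete_cauchy C_CompleteNormedModule _ PF Hc) as Hl.
  apply (@is_filter_lim_unique C_AbsRing C_NormedModule (filtermap f eventually)); auto.
  - now apply Proper_StrongProper.
  - intros P [eps HP]. eapply filter_imp; [exact HP|apply (Hl eps)].
Qed.

Lemma filterlim_Cplus (u v : nat -> C) a b :
  filterlim u eventually (locally a) -> filterlim v eventually (locally b) ->
  filterlim (fun M => u M + v M) eventually (locally (a + b)).
Proof.
  intros Hu Hv. apply (filterlim_comp_2 u v (fun x y => @plus C_NormedModule x y) Hu Hv).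
  apply (@filterlim_plus C_AbsRing C_NormedModule).
Qed.

Lemma filterlim_Cmult_l (u : nat -> C) a c :
  filterlim u eventually (locally a) ->
  filterlim (fun M => c * u M) eventually (locally (c * a)).
Proof.
  intros Hu. eapply filterlim_comp; [exact Hu|].
  apply (@filterlim_scal_r C_AbsRing C_NormedModule).
Qed.

Lemma filterlim_Cminus (u v : nat -> C) a b :
  filterlim u eventually (locally a) -> filterlim v eventually (locally b) ->
  filterlim (fun M => u M - v M) eventually (locally (a - b)).
Proof.
  intros Hu Hv. apply (filterlim_ext (fun M => u M + (-1) * v M)); [intros; ring|].
  replace (a - b) with (a + (-1) * b) by ring.
  now apply filterlim_Cplus, filterlim_Cmult_l.
Qed.

Lemma Cmod_lim_le (u : nat -> C) a b :
  filterlim u eventually (locally a) -> (forall M, Cmod (u M) <= b)%R -> (Cmod a <= b)%R.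
Proof.
  intros Hu Hb. apply Rnot_lt_le. intros Hlt.
  assert (He : (0 < Cmod a - b)%R) by lra.
  destruct (Hu (fun y => Cmod (y - a) < Cmod a - b)%R) as [N HN].
  { apply (locally_le_locally_norm (K:=C_AbsRing) (V:=C_NormedModule)).
    exists (mkposreal _ He). intros y Hy. exact Hy. }
  specialize (HN N (le_n _)). specialize (Hb N).
  assert (Cmod a <= Cmod (u N) + Cmod (u N - a))%R.
  { rewrite <- (Cmod_opp (u N - a)). replace a with (u N + - (u N - a)) at 1 by ring.
    apply Cmod_triangle. }
  lra.
Qed.

Lemma filterlim_Cmod_le_0 (u : nat -> C) (r : nat -> R) :
  (forall M, Cmod (u M) <= r M)%R -> is_lim_seq r 0%R -> filterlim u eventually (locally (RtoC 0)).
Proof.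
  intros Hb Hr.
  apply (filterlim_filter_le_2 _
    (locally_norm_le_locally (K:=C_AbsRing) (V:=C_NormedModule) (RtoC 0))).
  intros P [eps HP]. apply is_lim_seq_spec in Hr. destruct (Hr eps) as [N HN].
  exists N. intros n Hn. apply HP.
  change (Cmod (u n - 0) < eps)%R. replace (u n - 0) with (u n) by ring.
  specialize (HN n Hn). rewrite Rminus_0_r in HN.
  eapply Rle_lt_trans; [apply Hb|]. eapply Rle_lt_trans; [apply Rle_abs|exact HN].
Qed.

Definition nsum_lim (fs : list (C * nat)) : C :=
  @lim C_CompleteNormedModule (filtermap (nsum fs) eventually).

Lemma ex_lim_nsum_cons a k fs : (Cmod a < 1)%R -> bases_le_1 fs ->
  exists L, filterlim (nsum ((a, k) :: fs)) eventually (locally L).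
Proof.
  intros Ha Hfs.
  set (t := fun n => if (0 <? n)%nat
             then (pow_n a n / pow_n (RtoC (INR n)) k) * nsum fs n else RtoC 0).
  assert (Ht : ex_series (K:=C_AbsRing) (V:=C_CompleteNormedModule) t).
  { apply (ex_series_le _ (fun n => INR n ^ length fs * Cmod a ^ n)%R).
    2: apply ex_series_poly_geom; split; [apply Cmod_ge_0|auto].
    intros n. change (Cmod (t n) <= INR n ^ length fs * Cmod a ^ n)%R.
    unfold t. destruct (0 <? n)%nat eqn:E.
    - apply Nat.ltb_lt in E. rewrite Cmod_mult, Rmult_comm.
      apply Rmult_le_compat; try apply Cmod_ge_0; [|now apply Cmod_nsum_term_le].
      eapply Rle_trans; [now apply Cmod_nsum_le|].
      apply pow_incr. split; [apply pos_INR|]. apply le_INR; lia.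
    - rewrite Cmod_0. apply Rmult_le_pos; apply pow_le; [apply pos_INR|apply Cmod_ge_0]. }
  destruct Ht as [L HL]. exists L.
  change (filterlim (fun M => sum_n t (pred M)) eventually (locally L)).
  eapply filterlim_comp; [apply filterlim_pred|exact HL].
Qed.

Lemma filterlim_nsum fs : bases_le_1 fs -> head_base_lt_1 fs ->
  filterlim (nsum fs) eventually (locally (nsum_lim fs)).
Proof.
  intros Hle Hf. destruct fs as [|[a k] fs].
  - unfold nsum_lim. change (nsum []) with (fun _ : nat => RtoC 1).
    rewrite (lim_filtermap_eventually _ (RtoC 1)); apply filterlim_const.
  - inversion Hle; subst.
    destruct (ex_lim_nsum_cons a k fs Hf H2) as [L HL].
    unfold nsum_lim. now rewrite (lim_filtermap_eventually _ L HL).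
Qed.

Definition li_base (i j : nat) (z1 z2 : C) (l : nat) : C :=
  if (j =? 0)%nat then (if (l =? 0)%nat then z1 else 1) else mpl_base i z1 z2 l.

Lemma Li2_nsum_lim ks i j z1 z2 :
  Li2 ks i j z1 z2 = nsum_lim (indexed_factors (li_base i j z1 z2) 0 ks).
Proof.
  enough (E : forall s, map (fun p => (li_base i j z1 z2 (fst p), snd p))
                              (combine (seq s (length ks)) ks)
                          = indexed_factors (li_base i j z1 z2) s ks)
    by (unfold Li2, mpl_factors; now rewrite <- E).
  induction ks as [|k ks IH]; intros s; simpl; f_equal; auto.
Qed.

Lemma Cmod_mult_le_1 (x y : C) : (Cmod x <= 1)%R -> (Cmod y <= 1)%R -> (Cmod (x * y) <= 1)%R.
Proof.
  intros. rewrite Cmod_mult, <- (Rmult_1_l 1). apply Rmult_le_compat; auto; apply Cmod_ge_0.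
Qed.

Lemma Cmod_mult_lt_1 (x y : C) : (Cmod x <= 1)%R -> (Cmod y < 1)%R -> (Cmod (x * y) < 1)%R.
Proof. intros. rewrite Cmod_mult. pose proof (Cmod_ge_0 x). pose proof (Cmod_ge_0 y). nra. Qed.

Lemma Cmod_li_base_le_1 i j z1 z2 l : (Cmod z1 <= 1)%R -> (Cmod z2 <= 1)%R ->
  (Cmod (li_base i j z1 z2 l) <= 1)%R.
Proof.
  intros. unfold li_base, mpl_base.
  destruct (j =? 0)%nat, (l =? 0)%nat, (l =? i)%nat;
    rewrite ?Cmod_1; try lra; apply Cmod_mult_le_1; rewrite ?Cmod_1; lra.
Qed.

Section UnitDisk.

Variables z1 z2 : C.
Hypotheses (Hz1 : (Cmod z1 < 1)%R) (Hz2 : (Cmod z2 < 1)%R).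

Lemma bases_le_1_li i j s ks : bases_le_1 (indexed_factors (li_base i j z1 z2) s ks).
Proof.
  unfold bases_le_1. revert s; induction ks; intros s; simpl; constructor; auto.
  apply Cmod_li_base_le_1; lra.
Qed.

Lemma head_base_lt_1_li i j ks : head_base_lt_1 (indexed_factors (li_base i j z1 z2) 0 ks).
Proof.
  destruct ks; simpl; auto. unfold li_base, mpl_base. simpl.
  destruct (j =? 0)%nat; auto. rewrite Cmult_comm.
  apply Cmod_mult_lt_1; auto. destruct i; simpl; rewrite ?Cmod_1; lra.
Qed.

End UnitDisk.

(** * Termwise differentiation of a nested sum in one base *)

Lemma Cmult_pow_n_pred (z : C) n :
  z * (RtoC (INR n) * pow_n z (pred n)) = RtoC (INR n) * pow_n z n.
Proof. destruct n as [|n]; simpl; Cfold; ring. Qed.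

Lemma Cmod_pow_n_sub_le (w z : C) (r : R) n :
  (0 < r)%R -> (Cmod w <= r)%R -> (Cmod z <= r)%R ->
  (r * Cmod (pow_n w n - pow_n z n) <= INR n * r ^ n * Cmod (w - z))%R.
Proof.
  intros Hr Hw Hz. induction n as [|n IH].
  { simpl. replace (@one C_Ring - @one C_Ring) with (RtoC 0) by (Cfold; ring).
    rewrite Cmod_0. lra. }
  replace (pow_n w (S n) - pow_n z (S n)) with (w * (pow_n w n - pow_n z n) + pow_n z n * (w - z))
    by (rewrite !pow_n_S; ring).
  set (A := Cmod (pow_n w n - pow_n z n)) in *. set (X := Cmod (w - z)) in *.
  assert (0 <= A)%R by apply Cmod_ge_0. assert (0 <= X)%R by apply Cmod_ge_0.
  assert (Ht : (Cmod (w * (pow_n w n - pow_n z n) + pow_n z n * (w - z))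
                <= Cmod w * A + r ^ n * X)%R).
  { eapply Rle_trans; [apply Cmod_triangle|]. rewrite !Cmod_mult. apply Rplus_le_compat_l.
    apply Rmult_le_compat_r; auto.
    rewrite Cmod_pow_n. apply pow_incr. split; auto. apply Cmod_ge_0. }
  rewrite S_INR. simpl pow.
  assert (0 <= r ^ n)%R by (apply pow_le; lra). pose proof (pos_INR n). pose proof (Cmod_ge_0 w).
  assert (r * Cmod w * A <= r * (INR n * r ^ n * X))%R
    by (rewrite (Rmult_comm r (Cmod w)), Rmult_assoc; apply Rmult_le_compat; nra).
  nra.
Qed.

Lemma Cmod_pow_n_taylor_le (w z : C) (r : R) n :
  (0 < r)%R -> (Cmod w <= r)%R -> (Cmod z <= r)%R ->
  (r ^ 2 * Cmod (pow_n w n - pow_n z n - RtoC (INR n) * pow_n z (pred n) * (w - z))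
     <= INR n ^ 2 * r ^ n * Cmod (w - z) ^ 2)%R.
Proof.
  intros Hr Hw Hz. induction n as [|n IH].
  { simpl. replace (@one C_Ring - @one C_Ring - RtoC 0 * @one C_Ring * (w - z)) with (RtoC 0)
      by (Cfold; ring).
    rewrite Cmod_0. lra. }
  set (E := pow_n w n - pow_n z n - RtoC (INR n) * pow_n z (pred n) * (w - z)) in *.
  replace (pow_n w (S n) - pow_n z (S n) - RtoC (INR (S n)) * pow_n z (pred (S n)) * (w - z))
    with ((w - z) * (pow_n w n - pow_n z n) + z * E).
  2:{ unfold E. replace (z * (pow_n w n - pow_n z n - RtoC (INR n) * pow_n z (pred n) * (w - z)))
        with (z * (pow_n w n - pow_n z n) - (z * (RtoC (INR n) * pow_n z (pred n))) * (w - z))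
        by ring.
      rewrite Cmult_pow_n_pred. simpl pred. rewrite S_INR, RtoC_plus.
      rewrite !pow_n_S. ring. }
  pose proof (Cmod_pow_n_sub_le w z r n Hr Hw Hz) as HA.
  set (A := Cmod (pow_n w n - pow_n z n)) in *. set (X := Cmod (w - z)) in *.
  assert (0 <= A)%R by apply Cmod_ge_0. assert (0 <= Cmod E)%R by apply Cmod_ge_0.
  assert (0 <= X)%R by apply Cmod_ge_0.
  assert (Ht : (Cmod ((w - z) * (pow_n w n - pow_n z n) + z * E) <= X * A + r * Cmod E)%R).
  { eapply Rle_trans; [apply Cmod_triangle|]. rewrite !Cmod_mult. apply Rplus_le_compat_l.
    apply Rmult_le_compat_r; auto. }
  rewrite S_INR. simpl pow in *.
  assert (0 <= r ^ n)%R by (apply pow_le; lra). pose proof (pos_INR n).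
  assert (r * r * (X * A) <= r * X * (INR n * r ^ n * X))%R
    by (replace (r * r * (X * A))%R with (r * X * (r * A))%R by ring; apply Rmult_le_compat_l; nra).
  assert (r * r * (r * Cmod E) <= r * (INR n * (INR n * 1) * r ^ n * (X * (X * 1))))%R
    by (replace (r * r * (r * Cmod E))%R with (r * (r * (r * 1) * Cmod E))%R by ring;
        apply Rmult_le_compat_l; nra).
  assert (r * (r * 1) * Cmod ((w - z) * (pow_n w n - pow_n z n) + z * E) <=
          r * (r * 1) * (X * A + r * Cmod E))%R by (apply Rmult_le_compat_l; nra).
  assert (0 <= (INR n + 1) * (r * r ^ n * (X * X)))%R
    by (apply Rmult_le_pos; [lra|]; apply Rmult_le_pos; nra).
  lra.
Qed.

Lemma is_derive_of_quadratic_remainder (F : C -> C) z L (d K : R) : (0 < d)%R -> (0 <= K)%R ->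
  (forall w, (Cmod (w - z) < d)%R -> (Cmod (F w - F z - (w - z) * L) <= K * Cmod (w - z) ^ 2)%R) ->
  is_derive (K := C_AbsRing) (V := C_NormedModule) F z L.
Proof.
  intros Hd HK H. split; [apply (@is_linear_scal_l C_AbsRing C_NormedModule)|].
  intros x0 Hx0.
  pose proof (@is_filter_lim_locally_unique C_AbsRing (AbsRing_NormedModule C_AbsRing) z x0 Hx0).
  subst x0. intros eps.
  assert (He : (0 < eps)%R) by apply cond_pos.
  assert (Hm : (0 < Rmin d (eps / (K + 1)))%R)
    by (apply Rmin_pos; auto; apply Rdiv_lt_0_compat; lra).
  exists (mkposreal _ Hm). intros y Hy.
  change (Cmod (y - z) < Rmin d (eps / (K + 1)))%R in Hy.
  change (Cmod (F y - F z - (y - z) * L) <= eps * Cmod (y - z))%R.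
  eapply Rle_trans; [apply H; eapply Rlt_le_trans; [exact Hy|apply Rmin_l]|].
  assert (Hy2 : (Cmod (y - z) * (K + 1) <= eps)%R).
  { apply Rle_div_r; [lra|]. left. eapply Rlt_le_trans; [exact Hy|apply Rmin_r]. }
  pose proof (Cmod_ge_0 (y - z)). simpl. nra.
Qed.

Definition nsum_head_deriv (c : C) (k : nat) (rest : list (C * nat)) (z : C) (m : nat) : C :=
  sum_n (fun n => if (0 <? n)%nat
    then (RtoC (INR n) * pow_n c n * pow_n z (pred n) / pow_n (RtoC (INR n)) k) * nsum rest n
    else RtoC 0) (pred m).

Lemma sum_n_sub_sub_mult (f g h : nat -> C) x N :
  sum_n f N - sum_n g N - x * sum_n h N = sum_n (fun n => f n - g n - x * h n) N.
Proof.
  induction N as [|N IH]; [now rewrite !sum_O|].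
  rewrite !sum_Sn, <- IH. Cfold. ring.
Qed.

Section HeadTaylor.

Variables (c : C) (k : nat) (rest : list (C * nat)) (w z : C) (r : R).
Hypotheses (Hr : (0 < r)%R) (Hc : (Cmod c <= 1)%R) (Hrest : bases_le_1 rest)
  (Hw : (Cmod w <= r)%R) (Hz : (Cmod z <= r)%R).

Lemma Cmod_head_term_taylor_le n : (0 < n)%nat ->
  (Cmod (pow_n (c * w) n / pow_n (RtoC (INR n)) k * nsum rest n
         - pow_n (c * z) n / pow_n (RtoC (INR n)) k * nsum rest n
         - (w - z) * (RtoC (INR n) * pow_n c n * pow_n z (pred n) / pow_n (RtoC (INR n)) k
                      * nsum rest n))%C
   <= INR n ^ (length rest + 2) * r ^ n * (Cmod (w - z) ^ 2 / r ^ 2))%R.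
Proof.
  intros Hn. set (D := pow_n (RtoC (INR n)) k). set (R0 := nsum rest n).
  replace (pow_n (c * w) n / D * R0 - pow_n (c * z) n / D * R0 -
           (w - z) * (RtoC (INR n) * pow_n c n * pow_n z (pred n) / D * R0))
    with ((pow_n c n / D) * (pow_n w n - pow_n z n - RtoC (INR n) * pow_n z (pred n) * (w - z))
          * R0)
    by (rewrite !pow_n_Cmult; unfold Cdiv; ring).
  rewrite !Cmod_mult.
  assert (Hr2 : (0 < r ^ 2)%R) by (apply pow_lt; lra).
  pose proof (Cmod_pow_n_taylor_le w z r n Hr Hw Hz) as HE.
  set (E := Cmod (pow_n w n - pow_n z n - RtoC (INR n) * pow_n z (pred n) * (w - z))) in *.
  assert (HE' : (E <= INR n ^ 2 * r ^ n * (Cmod (w - z) ^ 2 / r ^ 2))%R).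
  { apply (Rmult_le_reg_l (r ^ 2)); auto.
    replace (r ^ 2 * (INR n ^ 2 * r ^ n * (Cmod (w - z) ^ 2 / r ^ 2)))%R
      with (INR n ^ 2 * r ^ n * Cmod (w - z) ^ 2)%R by (field; lra). exact HE. }
  assert (Ht : (Cmod (pow_n c n / D) <= 1)%R).
  { eapply Rle_trans; [now apply Cmod_nsum_term_le|].
    apply pow_le_1. split; auto. apply Cmod_ge_0. }
  assert (HR0 : (Cmod R0 <= INR n ^ length rest)%R).
  { eapply Rle_trans; [now apply Cmod_nsum_le|].
    apply pow_incr. split; [apply pos_INR|]. apply le_INR; lia. }
  assert (0 <= E)%R by apply Cmod_ge_0. pose proof (Cmod_ge_0 (pow_n c n / D)).
  rewrite pow_add.
  replace (INR n ^ length rest * INR n ^ 2 * r ^ n * (Cmod (w - z) ^ 2 / r ^ 2))%R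
    with (1 * (INR n ^ 2 * r ^ n * (Cmod (w - z) ^ 2 / r ^ 2)) * INR n ^ length rest)%R by ring.
  apply Rmult_le_compat; auto; [apply Rmult_le_pos; auto|apply Cmod_ge_0|].
  now apply Rmult_le_compat.
Qed.

End HeadTaylor.

Lemma nsum_head_taylor_bound c k rest (r : R) :
  (0 < r < 1)%R -> (Cmod c <= 1)%R -> bases_le_1 rest ->
  exists B, (0 <= B)%R /\ forall w z m, (Cmod w <= r)%R -> (Cmod z <= r)%R ->
    (Cmod (nsum ((c * w, k) :: rest) m - nsum ((c * z, k) :: rest) m
           - (w - z) * nsum_head_deriv c k rest z m)%C <= B * Cmod (w - z) ^ 2)%R.
Proof.
  intros Hr Hc Hrest.
  destruct (poly_geom_sum_bounded (length rest + 2) r) as [K HK]; [lra|].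
  assert (HK0 : (0 <= K)%R)
    by (eapply Rle_trans; [apply (poly_geom_sum_nonneg (length rest + 2) r O); lra|apply HK]).
  assert (Hr2 : (0 < r ^ 2)%R) by (apply pow_lt; lra).
  exists (K / r ^ 2)%R. split; [apply Rdiv_le_0_compat; auto|].
  intros w z m Hw Hz.
  assert (HX : (0 <= Cmod (w - z) ^ 2 / r ^ 2)%R)
    by (apply Rdiv_le_0_compat; auto; apply pow_le, Cmod_ge_0).
  unfold nsum_head_deriv. simpl nsum. rewrite sum_n_sub_sub_mult.
  eapply Rle_trans; [apply Cmod_sum_n|].
  apply Rle_trans with
    (sum_f_R0 (fun n => INR n ^ (length rest + 2) * r ^ n * (Cmod (w - z) ^ 2 / r ^ 2)) (pred m))%R.
  - apply sum_Rle. intros n _. destruct (0 <? n)%nat eqn:E.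
    + apply Nat.ltb_lt in E. apply Cmod_head_term_taylor_le; auto. lra.
    + replace (RtoC 0 - RtoC 0 - (w - z) * RtoC 0) with (RtoC 0) by ring.
      rewrite Cmod_0. apply Rmult_le_pos; auto.
      apply Rmult_le_pos; apply pow_le; [apply pos_INR|lra].
  - rewrite <- scal_sum. fold (poly_geom_sum (length rest + 2) r (pred m)).
    replace (K / r ^ 2 * Cmod (w - z) ^ 2)%R with (Cmod (w - z) ^ 2 / r ^ 2 * K)%R
      by (unfold Rdiv; ring).
    apply Rmult_le_compat_l; auto.
Qed.

(* The Taylor bound above is uniform in the truncation [m], so it survives the outer sums and
   the limit. *)
Lemma is_derive_nsum_lim pre c k rest z L :
  bases_le_1 pre -> head_base_lt_1 pre -> (Cmod c <= 1)%R -> bases_le_1 rest -> (Cmod z < 1)%R ->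
  filterlim (nsum_with pre (nsum_head_deriv c k rest z)) eventually (locally L) ->
  is_derive (K := C_AbsRing) (V := C_NormedModule)
    (fun w => nsum_lim (pre ++ (c * w, k) :: rest)) z L.
Proof.
  intros Hpre Hf Hc Hrest Hz HL.
  set (r := ((1 + Cmod z) / 2)%R). pose proof (Cmod_ge_0 z).
  assert (Hr : (0 < r < 1)%R) by (unfold r; lra).
  destruct (nsum_head_taylor_bound c k rest r Hr Hc Hrest) as [Bd [HBd HD]].
  destruct (Cmod_nsum_with_uniform pre Hpre Hf) as [Bp [HBp HP]].
  assert (Hconv : forall w, (Cmod w < 1)%R ->
    filterlim (nsum (pre ++ (c * w, k) :: rest)) eventually
      (locally (nsum_lim (pre ++ (c * w, k) :: rest)))).
  { intros w Hw. apply filterlim_nsum.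
    - apply Forall_app. split; auto. constructor; auto. simpl. left. now apply Cmod_mult_lt_1.
    - destruct pre as [|[a k0] pre]; simpl; auto. now apply Cmod_mult_lt_1. }
  apply (is_derive_of_quadratic_remainder _ z L ((1 - Cmod z) / 2) (Bp * Bd));
    [lra|now apply Rmult_le_pos|].
  intros w Hw.
  assert (Hwr : (Cmod w <= r)%R).
  { replace w with (z + (w - z)) by ring. eapply Rle_trans; [apply Cmod_triangle|]. unfold r; lra. }
  apply (Cmod_lim_le (fun M => nsum (pre ++ (c * w, k) :: rest) M
    - nsum (pre ++ (c * z, k) :: rest) M - (w - z) * nsum_with pre (nsum_head_deriv c k rest z) M)).
  { apply filterlim_Cminus; [apply filterlim_Cminus|apply filterlim_Cmult_l, HL];
      apply Hconv; lra. }
  intros M. rewrite !nsum_app, <- nsum_with_scal, <- !nsum_with_minus, Rmult_assoc.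
  apply HP. intros m. apply HD; auto. unfold r; lra.
Qed.

(** * Evaluation of the termwise derivative *)

Lemma nsum_head_deriv_succ c k rest z m : z <> RtoC 0 ->
  nsum_head_deriv c (S k) rest z m = / z * nsum ((c * z, k) :: rest) m.
Proof.
  intros Hz. unfold nsum_head_deriv. simpl nsum. rewrite <- (sum_n_mult_l (K:=C_Ring)).
  apply sum_n_m_ext. intros n. destruct (0 <? n)%nat eqn:E; [|Cfold; ring].
  apply Nat.ltb_lt in E. destruct n as [|n]; [lia|]. simpl pred.
  pose proof (RtoC_INR_neq0 (S n) E).
  pose proof (pow_n_neq0 (RtoC (INR (S n))) k (RtoC_INR_neq0 (S n) E)).
  rewrite pow_n_Cmult, !pow_n_S. Cfold. field. auto.
Qed.

Definition scale_head (x : C) (fs : list (C * nat)) :=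
  match fs with [] => [] | (b, k) :: fs' => (b * x, k) :: fs' end.

(* Abel summation: for [k = 1] the weight [n z^(n-1) / n] of the derivative is geometric, so
   summing it against the inner sum shifts the factor [x] into the next index. *)
Lemma sum_n_geom_nsum x rest m :
  (1 - x) * sum_n (fun n => if (0 <? n)%nat then pow_n x (pred n) * nsum rest n else RtoC 0) m
  = nsum (scale_head x rest) (S m) - pow_n x m * nsum rest (S m).
Proof.
  induction m as [|m IH].
  - rewrite sum_O. destruct rest as [|[b k] r]; simpl; [|rewrite !sum_O]; simpl; Cfold; ring.
  - rewrite sum_Sn. change (plus ?a ?b) with (Cplus a b). simpl pred.
    replace (0 <? S m)%nat with true by reflexivity.
    rewrite Cmult_plus_distr_l, IH.
    destruct rest as [|[b k] r]; [simpl; Cfold; ring|].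
    simpl scale_head. simpl nsum. simpl pred.
    rewrite !sum_Sn. change (plus ?a ?b) with (Cplus a b).
    replace (0 <? S m)%nat with true by reflexivity.
    rewrite pow_n_Cmult, (pow_n_S x m). unfold Cdiv. ring.
Qed.

Lemma nsum_head_deriv_one c rest z m : c * z <> RtoC 1 ->
  nsum_head_deriv c 1 rest z m =
  c / (1 - c * z) * (nsum (scale_head (c * z) rest) m - pow_n (c * z) (pred m) * nsum rest m).
Proof.
  intros Hx.
  assert (H1 : 1 - c * z <> RtoC 0)
    by (intro E; apply Hx; rewrite <- (Cplus_0_l (c * z)), <- E; ring).
  assert (E : nsum_head_deriv c 1 rest z m = c * sum_n (fun n => if (0 <? n)%nat
                then pow_n (c * z) (pred n) * nsum rest n else RtoC 0) (pred m)).
  { unfold nsum_head_deriv. rewrite <- (sum_n_mult_l (K:=C_Ring)). apply sum_n_m_ext. intros n.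
    destruct (0 <? n)%nat eqn:En; [|Cfold; ring].
    apply Nat.ltb_lt in En. destruct n as [|n]; [lia|]. simpl pred.
    pose proof (RtoC_INR_neq0 (S n) En).
    rewrite pow_n_Cmult, pow_n_S, pow_n_S. change (pow_n (RtoC (INR (S n))) 0) with (RtoC 1).
    Cfold. field. auto. }
  rewrite E. destruct m as [|m].
  - simpl pred. rewrite sum_O. destruct rest as [|[b k] r]; simpl; [|rewrite !sum_O]; simpl; Cfold;
      field; auto.
  - simpl pred. rewrite <- sum_n_geom_nsum. field. auto.
Qed.

Lemma nsum_with_snoc_geom pre a k x rest M : x <> RtoC 0 ->
  nsum_with (pre ++ [(a, k)]) (fun m => pow_n x (pred m) * nsum rest m) M
  = / x * nsum (pre ++ (a * x, k) :: rest) M.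
Proof.
  intros Hx. rewrite nsum_with_app, nsum_app, <- nsum_with_scal. apply nsum_with_ext. intros m.
  simpl. rewrite <- (sum_n_mult_l (K:=C_Ring)). apply sum_n_m_ext. intros n.
  destruct (0 <? n)%nat eqn:En; [|Cfold; ring].
  apply Nat.ltb_lt in En. destruct n as [|n]; [lia|]. simpl pred.
  pose proof (pow_n_neq0 (RtoC (INR (S n))) k (RtoC_INR_neq0 (S n) En)).
  rewrite pow_n_Cmult, (pow_n_S x n). Cfold. field. auto.
Qed.

Lemma filterlim_pow_n_nsum x rest : bases_le_1 rest -> (Cmod x < 1)%R ->
  filterlim (fun m => pow_n x (pred m) * nsum rest m) eventually (locally (RtoC 0)).
Proof.
  intros Hr Hx.
  apply (filterlim_Cmod_le_0 _ (fun m => INR (pred m) ^ length rest * Cmod x ^ (pred m))%R).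
  - intros m. rewrite Cmod_mult, Cmod_pow_n, Rmult_comm.
    apply Rmult_le_compat_r; [apply pow_le, Cmod_ge_0|]. now apply Cmod_nsum_le.
  - apply (filterlim_comp _ _ _ Nat.pred (fun n => INR n ^ length rest * Cmod x ^ n)%R _ _ _
      filterlim_pred).
    apply ex_series_lim_0, ex_series_poly_geom. split; [apply Cmod_ge_0|auto].
Qed.

Lemma bases_le_1_scale_head x fs : (Cmod x <= 1)%R -> bases_le_1 fs -> bases_le_1 (scale_head x fs).
Proof.
  intros Hx Hfs. destruct fs as [|[b k] fs]; simpl; auto.
  inversion Hfs; subst. constructor; auto. simpl in *. now apply Cmod_mult_le_1.
Qed.

Lemma head_base_lt_1_scale_head x fs : (Cmod x < 1)%R -> bases_le_1 fs ->
  head_base_lt_1 (scale_head x fs).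
Proof.
  intros Hx Hfs. destruct fs as [|[b k] fs]; simpl; auto.
  inversion Hfs; subst. simpl in *. now apply Cmod_mult_lt_1.
Qed.

Section HeadDerivative.

Variables (c z : C) (rest : list (C * nat)).
Hypotheses (Hc : (Cmod c <= 1)%R) (Hz : (Cmod z < 1)%R) (Hrest : bases_le_1 rest).

Let Hcz : (Cmod (c * z) < 1)%R.
Proof. now apply Cmod_mult_lt_1. Qed.

Let Hcz1 : c * z <> RtoC 1.
Proof. intro E. pose proof Hcz as H. rewrite E, Cmod_1 in H. lra. Qed.

Lemma is_derive_nsum_lim_succ pre k :
  bases_le_1 pre -> head_base_lt_1 pre -> z <> RtoC 0 ->
  is_derive (K := C_AbsRing) (V := C_NormedModule)
    (fun w => nsum_lim (pre ++ (c * w, S k) :: rest)) z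
    (/ z * nsum_lim (pre ++ (c * z, k) :: rest)).
Proof.
  intros Hpre Hf Hz0. apply is_derive_nsum_lim; auto.
  apply (filterlim_ext (fun M => / z * nsum (pre ++ (c * z, k) :: rest) M)).
  { intros M. rewrite nsum_app, <- nsum_with_scal. apply nsum_with_ext. intros m.
    now rewrite nsum_head_deriv_succ. }
  apply filterlim_Cmult_l, filterlim_nsum.
  - apply Forall_app. split; auto. constructor; auto. simpl. now left.
  - destruct pre as [|[a k0] pre]; simpl; auto.
Qed.

Lemma is_derive_nsum_lim_one :
  is_derive (K := C_AbsRing) (V := C_NormedModule)
    (fun w => nsum_lim ((c * w, 1%nat) :: rest)) z
    (c / (1 - c * z) * nsum_lim (scale_head (c * z) rest)).
Proof.
  apply (is_derive_nsum_lim []); simpl; auto; [constructor|].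
  apply (filterlim_ext (fun m => c / (1 - c * z) *
    (nsum (scale_head (c * z) rest) m - pow_n (c * z) (pred m) * nsum rest m))).
  { intros m. now rewrite nsum_head_deriv_one. }
  apply filterlim_Cmult_l.
  replace (nsum_lim (scale_head (c * z) rest)) with (nsum_lim (scale_head (c * z) rest) - RtoC 0)
    by ring.
  apply filterlim_Cminus; [|now apply filterlim_pow_n_nsum].
  apply filterlim_nsum; [apply bases_le_1_scale_head|apply head_base_lt_1_scale_head]; auto; lra.
Qed.

Lemma is_derive_nsum_lim_one_snoc pre a k :
  bases_le_1 (pre ++ [(a, k)]) -> head_base_lt_1 (pre ++ [(a, k)]) -> c * z <> RtoC 0 ->
  is_derive (K := C_AbsRing) (V := C_NormedModule)
    (fun w => nsum_lim ((pre ++ [(a, k)]) ++ (c * w, 1%nat) :: rest)) z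
    (c / (1 - c * z) * (nsum_lim ((pre ++ [(a, k)]) ++ scale_head (c * z) rest)
                        - / (c * z) * nsum_lim (pre ++ (a * (c * z), k) :: rest))).
Proof.
  intros Hpre Hf Hx. apply is_derive_nsum_lim; auto.
  apply (filterlim_ext (fun M => c / (1 - c * z) *
    (nsum ((pre ++ [(a, k)]) ++ scale_head (c * z) rest) M
     - / (c * z) * nsum (pre ++ (a * (c * z), k) :: rest) M))).
  { intros M. rewrite (nsum_with_ext _ _ _ _ (fun m => nsum_head_deriv_one c rest z m Hcz1)).
    now rewrite nsum_with_scal, nsum_with_minus, nsum_with_snoc_geom, nsum_app. }
  apply Forall_app in Hpre as [Hpre Ha]. inversion Ha; subst.
  apply filterlim_Cmult_l, filterlim_Cminus; [|apply filterlim_Cmult_l]; apply filterlim_nsum.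
  - apply Forall_app. split; [now apply Forall_app|].
    apply bases_le_1_scale_head; auto; lra.
  - destruct pre as [|[b k0] pre]; simpl in *; auto.
  - apply Forall_app. split; auto. constructor; auto. simpl in *. now apply Cmod_mult_le_1; [|lra].
  - destruct pre as [|[b k0] pre]; simpl in *; auto. now apply Cmod_mult_lt_1.
Qed.

End HeadDerivative.

(* [li_base i j z1 z2] is linear in [z1] at index [0] and in [z2] at index [i] (the slot of
   [n_(i+1)]), and does not depend on them elsewhere. *)
Lemma Li2_cons_z1 k tl i j z1 z2 w :
  Li2 (k :: tl) i j w z2 =
  nsum_lim ((li_base i j 1 z2 0 * w, k) :: indexed_factors (li_base i j z1 z2) 1 tl).
Proof.
  rewrite Li2_nsum_lim. simpl. do 2 f_equal.
  - f_equal. unfold li_base, mpl_base. destruct_eqb; ring.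
  - apply indexed_factors_ext. intros l Hl. unfold li_base, mpl_base. destruct_eqb.
Qed.

Lemma Li2_app_z2 P k S0 i j z1 z2 w : length P = i -> (1 <= j)%nat ->
  Li2 (P ++ k :: S0) i j z1 w =
  nsum_lim (indexed_factors (li_base i j z1 z2) 0 P ++
            (li_base i j z1 1 i * w, k) :: indexed_factors (li_base i j z1 z2) (S i) S0).
Proof.
  intros HP Hj. subst i. rewrite Li2_nsum_lim. f_equal.
  apply indexed_factors_slot; intros; unfold li_base, mpl_base; destruct_eqb; ring.
Qed.

Lemma scale_head_indexed_factors x g g' s ks :
  g' s = g s * x -> (forall l, (s < l)%nat -> g' l = g l) ->
  scale_head x (indexed_factors g s ks) = indexed_factors g' s ks.
Proof.
  intros Hs Hl. destruct ks as [|k ks]; simpl; auto. rewrite Hs. f_equal.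
  apply indexed_factors_ext. intros l Hl'. symmetry. apply Hl. lia.
Qed.

Lemma scale_head_li_pos i j z1 z2 tl : (0 < i)%nat ->
  scale_head z1 (indexed_factors (li_base i j z1 z2) 1 tl) =
  indexed_factors (li_base (i - 1) j z1 z2) 0 tl.
Proof.
  intros Hi. rewrite indexed_factors_shift.
  apply scale_head_indexed_factors; intros; unfold li_base, mpl_base; destruct_eqb; ring.
Qed.

Lemma scale_head_li_zero j z1 z2 tl : (1 <= j)%nat -> length tl = (j - 1)%nat ->
  scale_head (z1 * z2) (indexed_factors (li_base 0 j z1 z2) 1 tl) =
  indexed_factors (li_base 0 (j - 1) z1 z2) 0 tl.
Proof.
  intros Hj Hl. destruct tl as [|k tl]; auto.
  rewrite indexed_factors_shift.
  apply scale_head_indexed_factors; intros; simpl in Hl;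
    unfold li_base, mpl_base; destruct_eqb; ring.
Qed.

Lemma indexed_factors_li_merge_z2_next P S0 i j z1 z2 :
  length P = i -> (1 <= j)%nat -> length S0 = (j - 1)%nat ->
  indexed_factors (li_base i j z1 z2) 0 P ++
    scale_head (li_base i j z1 1 i * z2) (indexed_factors (li_base i j z1 z2) (S i) S0) =
  indexed_factors (li_base i (j - 1) z1 z2) 0 (P ++ S0).
Proof.
  intros HP Hj HS. subst i. rewrite indexed_factors_app. f_equal.
  { apply indexed_factors_ext. intros l Hl. unfold li_base, mpl_base. destruct_eqb; ring. }
  destruct S0 as [|k S0]; auto. simpl in HS.
  rewrite indexed_factors_shift. apply scale_head_indexed_factors; intros;
    unfold li_base, mpl_base; destruct_eqb; ring.
Qed.

Lemma indexed_factors_li_merge_z2_prev P kk S0 i j z1 z2 :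
  length P = (i - 1)%nat -> (0 < i)%nat -> (1 <= j)%nat ->
  indexed_factors (li_base i j z1 z2) 0 P ++
    (li_base i j z1 z2 (i - 1) * (li_base i j z1 1 i * z2), kk) ::
    indexed_factors (li_base i j z1 z2) (S i) S0 =
  indexed_factors (li_base (i - 1) j z1 z2) 0 ((P ++ [kk]) ++ S0).
Proof.
  intros HP Hi Hj. rewrite <- app_assoc, indexed_factors_app, HP. simpl. f_equal.
  { apply indexed_factors_ext. intros l Hl. unfold li_base, mpl_base. destruct_eqb; ring. }
  f_equal.
  - f_equal. unfold li_base, mpl_base. destruct_eqb; ring.
  - rewrite indexed_factors_shift. replace (S (i - 1)) with i by lia.
    apply indexed_factors_ext. intros l Hl. unfold li_base, mpl_base. destruct_eqb; ring.
Qed.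

Lemma is_derive_eq_deriv (f : C -> C) z L L' :
  is_derive (K := C_AbsRing) (V := C_NormedModule) f z L -> L = L' ->
  is_derive (K := C_AbsRing) (V := C_NormedModule) f z L'.
Proof. now intros H <-. Qed.

Section PartialDerivatives.

Variables z1 z2 : C.
Hypotheses (Hz1 : (Cmod z1 < 1)%R) (Hz2 : (Cmod z2 < 1)%R).

Let Hrest i j s ks : bases_le_1 (indexed_factors (li_base i j z1 z2) s ks).
Proof. now apply bases_le_1_li. Qed.

Let Hcoef1 i j : (Cmod (li_base i j 1 z2 0) <= 1)%R.
Proof. apply Cmod_li_base_le_1; rewrite ?Cmod_1; lra. Qed.

Let Hcoef2 i j : (Cmod (li_base i j z1 1 i) <= 1)%R.
Proof. apply Cmod_li_base_le_1; rewrite ?Cmod_1; lra. Qed.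

Let H1z2 : 1 - z2 <> RtoC 0.
Proof.
  intro E. assert (E1 : z2 = RtoC 1) by (transitivity (1 - (1 - z2)); [ring|rewrite E; ring]).
  rewrite E1, Cmod_1 in Hz2. lra.
Qed.

Lemma is_derive_Li2_z1_succ k tl i j : z1 <> RtoC 0 ->
  is_derive (K := C_AbsRing) (V := C_NormedModule)
    (fun w => Li2 (S k :: tl) i j w z2) z1 (1 / z1 * Li2 (k :: tl) i j z1 z2).
Proof.
  intros Hz. eapply is_derive_ext; [intros w; symmetry; apply (Li2_cons_z1 _ _ _ _ z1)|].
  eapply is_derive_eq_deriv.
  - apply (is_derive_nsum_lim_succ _ _ _ (Hcoef1 i j) Hz1 (Hrest i j 1 tl) []); auto; constructor.
  - rewrite (Li2_cons_z1 _ _ _ _ z1). cbn [app]. unfold Cdiv. Cfold. ring.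
Qed.

Lemma is_derive_Li2_z1_pos tl i j : (0 < i)%nat ->
  is_derive (K := C_AbsRing) (V := C_NormedModule)
    (fun w => Li2 (1%nat :: tl) i j w z2) z1 (1 / (1 - z1) * Li2 tl (i - 1) j z1 z2).
Proof.
  intros Hi. eapply is_derive_ext; [intros w; symmetry; apply (Li2_cons_z1 _ _ _ _ z1)|].
  eapply is_derive_eq_deriv;
    [apply (is_derive_nsum_lim_one _ _ _ (Hcoef1 i j) Hz1 (Hrest i j 1 tl))|].
  replace (li_base i j 1 z2 0) with (RtoC 1) by (unfold li_base, mpl_base; destruct_eqb; ring).
  now rewrite Cmult_1_l, Li2_nsum_lim, scale_head_li_pos.
Qed.

Lemma is_derive_Li2_z1_zero tl j : (1 <= j)%nat -> length tl = (j - 1)%nat ->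
  is_derive (K := C_AbsRing) (V := C_NormedModule)
    (fun w => Li2 (1%nat :: tl) 0 j w z2) z1 (z2 / (1 - z1 * z2) * Li2 tl 0 (j - 1) z1 z2).
Proof.
  intros Hj Hl. eapply is_derive_ext; [intros w; symmetry; apply (Li2_cons_z1 _ _ _ _ z1)|].
  eapply is_derive_eq_deriv;
    [apply (is_derive_nsum_lim_one _ _ _ (Hcoef1 0 j) Hz1 (Hrest 0 j 1 tl))|].
  replace (li_base 0 j 1 z2 0) with z2 by (unfold li_base, mpl_base; destruct_eqb; ring).
  now rewrite (Cmult_comm z2 z1), Li2_nsum_lim, scale_head_li_zero.
Qed.

Lemma is_derive_Li2_z2_succ P k S0 i j : length P = i -> (1 <= j)%nat -> z2 <> RtoC 0 ->
  is_derive (K := C_AbsRing) (V := C_NormedModule)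
    (fun w => Li2 (P ++ S k :: S0) i j z1 w) z2 (1 / z2 * Li2 (P ++ k :: S0) i j z1 z2).
Proof.
  intros HP Hj Hz.
  eapply is_derive_ext; [intros w; symmetry; apply (Li2_app_z2 _ _ _ _ _ _ z2); auto|].
  eapply is_derive_eq_deriv.
  - apply (is_derive_nsum_lim_succ _ _ _ (Hcoef2 i j) Hz2 (Hrest i j (S i) S0));
      [apply Hrest|now apply head_base_lt_1_li|exact Hz].
  - rewrite (Li2_app_z2 _ _ _ _ _ _ z2) by auto. unfold Cdiv. Cfold. ring.
Qed.

Lemma is_derive_Li2_z2_zero tl j : (1 <= j)%nat -> length tl = (j - 1)%nat ->
  is_derive (K := C_AbsRing) (V := C_NormedModule)
    (fun w => Li2 (1%nat :: tl) 0 j z1 w) z2 (z1 / (1 - z1 * z2) * Li2 tl 0 (j - 1) z1 z2).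
Proof.
  intros Hj Hl.
  eapply is_derive_ext; [intros w; symmetry; apply (Li2_app_z2 [] _ _ _ _ _ z2); auto|].
  eapply is_derive_eq_deriv;
    [apply (is_derive_nsum_lim_one _ _ _ (Hcoef2 0 j) Hz2 (Hrest 0 j 1 tl))|].
  replace (li_base 0 j z1 1 0) with z1 by (unfold li_base, mpl_base; destruct_eqb; ring).
  now rewrite Li2_nsum_lim, scale_head_li_zero.
Qed.

Lemma is_derive_Li2_z2_pos P S0 i j :
  length P = i -> length S0 = (j - 1)%nat -> (0 < i)%nat -> (1 <= j)%nat -> z2 <> RtoC 0 ->
  is_derive (K := C_AbsRing) (V := C_NormedModule)
    (fun w => Li2 (P ++ 1%nat :: S0) i j z1 w) z2
    (1 / (1 - z2) * Li2 (P ++ S0) i (j - 1) z1 z2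
     - 1 / (1 - z2) * Li2 (P ++ S0) (i - 1) j z1 z2
     - 1 / z2 * Li2 (P ++ S0) (i - 1) j z1 z2).
Proof.
  intros HP HS Hi Hj Hz.
  destruct (exists_last (l := P)) as [P' [kk ->]]; [intros ->; simpl in HP; lia|].
  assert (HP' : length P' = (i - 1)%nat) by (rewrite length_app in HP; simpl in HP; lia).
  assert (Hpre : indexed_factors (li_base i j z1 z2) 0 (P' ++ [kk]) =
                 indexed_factors (li_base i j z1 z2) 0 P' ++ [(li_base i j z1 z2 (i - 1)%nat, kk)])
    by (now rewrite indexed_factors_app, HP').
  assert (Hc : li_base i j z1 1 i = 1) by (unfold li_base, mpl_base; destruct_eqb; ring).
  eapply is_derive_ext; [intros w; symmetry; apply (Li2_app_z2 _ _ _ _ _ _ z2); auto|].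
  rewrite Hpre.
  eapply is_derive_eq_deriv;
    [apply (is_derive_nsum_lim_one_snoc _ _ _ (Hcoef2 i j) Hz2 (Hrest i j (S i) S0))|].
  - rewrite <- Hpre. apply Hrest.
  - rewrite <- Hpre. now apply head_base_lt_1_li.
  - now rewrite Hc, Cmult_1_l.
  - rewrite <- Hpre, indexed_factors_li_merge_z2_next, indexed_factors_li_merge_z2_prev,
      <- !Li2_nsum_lim, Hc by auto.
    Cfold. field. auto.
Qed.

End PartialDerivatives.

Theorem proposition7p1 (i j : nat) (ks : list nat) (z1 z2 : C) :
  length ks = (i + j)%nat -> (1 <= i + j)%nat ->
  List.Forall (fun k => (1 <= k)%nat) ks ->
  (Cmod z1 < 1)%R -> (Cmod z2 < 1)%R ->
  let k1 := hd O ks in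
  let ki1 := nth i ks O in
  let k' := firstn i ks ++ skipn (S i) ks in
  (i = O -> k1 = 1%nat ->
     is_derive (K := C_AbsRing) (V := C_NormedModule)
       (fun w => Li2 ks i j w z2) z1
       (z2 / (1 - z1 * z2) * Li2 (tl ks) 0 (j - 1) z1 z2)) /\
  ((0 < i)%nat -> k1 = 1%nat ->
     is_derive (K := C_AbsRing) (V := C_NormedModule)
       (fun w => Li2 ks i j w z2) z1
       (1 / (1 - z1) * Li2 (tl ks) (i - 1) j z1 z2)) /\
  ((1 < k1)%nat -> z1 <> RtoC 0 ->
     is_derive (K := C_AbsRing) (V := C_NormedModule)
       (fun w => Li2 ks i j w z2) z1
       (1 / z1 * Li2 ((k1 - 1)%nat :: tl ks) i j z1 z2)) /\
  ((1 <= j)%nat ->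
    (i = O -> k1 = 1%nat ->
       is_derive (K := C_AbsRing) (V := C_NormedModule)
         (fun w => Li2 ks i j z1 w) z2
         (z1 / (1 - z1 * z2) * Li2 (tl ks) 0 (j - 1) z1 z2)) /\
    ((0 < i)%nat -> ki1 = 1%nat -> z2 <> RtoC 0 ->
       is_derive (K := C_AbsRing) (V := C_NormedModule)
         (fun w => Li2 ks i j z1 w) z2
         (1 / (1 - z2) * Li2 k' i (j - 1) z1 z2
          - 1 / (1 - z2) * Li2 k' (i - 1) j z1 z2
          - 1 / z2 * Li2 k' (i - 1) j z1 z2)) /\
    ((1 < ki1)%nat -> z2 <> RtoC 0 ->
       is_derive (K := C_AbsRing) (V := C_NormedModule)
         (fun w => Li2 ks i j z1 w) z2
         (1 / z2 * Li2 (firstn i ks ++ (ki1 - 1)%nat :: skipn (S i) ks) i j z1 z2))).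
Proof.
  (* The formulas hold for exponents 0 as well. *)
  intros Hlen Hij _ Hz1 Hz2 k1 ki1 k'. subst k1 ki1 k'.
  destruct ks as [|k tl]; [simpl in Hlen; lia|]. simpl in Hlen. cbn [hd List.tl].
  split; [|split; [|split]].
  - intros -> ->. apply is_derive_Li2_z1_zero; auto; lia.
  - intros Hi ->. now apply is_derive_Li2_z1_pos.
  - intros Hk Hz. destruct k as [|[|k]]; [lia|lia|].
    replace (S (S k) - 1)%nat with (S k) by lia. now apply is_derive_Li2_z1_succ.
  - intros Hj. set (ks := k :: tl) in *.
    assert (Hmid : firstn i ks ++ nth i ks O :: skipn (S i) ks = ks)
      by (apply firstn_skipn_middle, nth_error_nth'; simpl; lia).
    assert (HP : length (firstn i ks) = i) by (rewrite length_firstn; simpl; lia).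
    assert (HS : length (skipn (S i) ks) = (j - 1)%nat) by (rewrite length_skipn; simpl; lia).
    assert (Hext : forall L,
      is_derive (K := C_AbsRing) (V := C_NormedModule)
        (fun w => Li2 (firstn i ks ++ nth i ks O :: skipn (S i) ks) i j z1 w) z2 L ->
      is_derive (K := C_AbsRing) (V := C_NormedModule) (fun w => Li2 ks i j z1 w) z2 L)
      by (intros L; apply is_derive_ext; intros w; now rewrite Hmid).
    split; [|split].
    + intros -> ->. apply is_derive_Li2_z2_zero; auto; lia.
    + intros Hi Hk Hz. apply Hext. rewrite Hk. now apply is_derive_Li2_z2_pos.
    + intros Hk Hz. apply Hext. revert Hk. destruct (nth i ks O) as [|[|k0]]; intros Hk; [lia|lia|].
      replace (S (S k0) - 1)%nat with (S k0) by lia. now apply is_derive_Li2_z2_succ.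
Qed.
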